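(* If $f\colon A\to B$ is an anodyne extension of simplicial sets, then the map $\hat Cf\colon B\sqcup_A CA\to CB$ (induced by $j_B\colon B\to CB$ and $Cf\colon CA\to CB$) is a right anodyne extension.
   Context: An anodyne extension is a map of simplicial sets with the left lifting property with respect to all Kan fibrations. A right fibration is a map with the right lifting property with respect to all horn inclusions $\Lambda^k[n]\to\Delta[n]$ with $n\ge1$ and $0<k\le n$ ($\Lambda^k[n]$ the horn omitting the face opposite vertex $k$); a right anodyne extension is a map with the left lifting property with respect to all right fibrations. Cone construction: let $\Delta^-$ be the category of ordered sets $[n]=\{0,\dots,n\}$ for $n\ge-1$ ($[-1]=\emptyset$) and order-preserving maps; extend a simplicial set $A$ to $\Delta^-$ by $A_{-1}=$ a point. Let $C\Delta\colon\Delta^-\to$ (based simplicial sets) send $[n]$ to $\Delta[n+1]$ based at vertex $0$, and $f\colon[m]\to[n]$ to the map induced by $\bar f\colon[m+1]\to[n+1]$, $\bar f(0)=0$, $\bar f(k)=f(k-1)+1$ for $k>0$. Then $CA=\int^{n\in\Delta^-}A_n\times C\Delta[n]$ (adding a cone point to every simplex, all cone points identified to a base vertex). The natural inclusion $j_A\colon A\to CA$ is induced by $\delta_0\colon\Delta[n]\to\Delta[n+1]$, the inclusion of the face opposite $0$. *)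

From mathcomp Require Import all_boot.

Set Implicit Arguments.
Unset Strict Implicit.
Unset Printing Implicit Defensive.

Definition monob (m n : nat) (f : {ffun 'I_m.+1 -> 'I_n.+1}) : bool :=
  [forall i : 'I_m.+1, forall j : 'I_m.+1, (i <= j)%N ==> (f i <= f j)%N].

Definition mono (m n : nat) := {f : {ffun 'I_m.+1 -> 'I_n.+1} | monob f}.

Definition app (m n : nat) (t : mono m n) (i : 'I_m.+1) : 'I_n.+1 := val t i.

Lemma mono_le (m n : nat) (t : mono m n) (i j : 'I_m.+1) :
  (i <= j)%N -> (app t i <= app t j)%N.
Proof.
move=> hij; have := valP t; move/forallP/(_ i)/forallP/(_ j)/implyP; exact.
Qed.

Lemma mid_proof n : monob [ffun i : 'I_n.+1 => i].
Proof. by apply/forallP => i; apply/forallP => j; rewrite !ffunE; apply/implyP. Qed.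

Definition mid (n : nat) : mono n n := exist (fun f => monob f) _ (mid_proof n).

Lemma mcomp_proof (m n p : nat) (g : mono n p) (f : mono m n) :
  monob [ffun i => app g (app f i)].
Proof.
apply/forallP => i; apply/forallP => j; apply/implyP => hij; rewrite !ffunE.
by apply: mono_le; apply: mono_le.
Qed.

Definition mcomp (m n p : nat) (g : mono n p) (f : mono m n) : mono m p :=
  exist (fun f => monob f) _ (mcomp_proof g f).

Lemma mcomp_id_r m n (t : mono m n) : mcomp t (mid m) = t.
Proof. by apply: val_inj; apply/ffunP => i; rewrite /= !ffunE /app /= ffunE. Qed.

Lemma mcomp_assoc m n p q (h : mono p q) (g : mono n p) (f : mono m n) :
  mcomp h (mcomp g f) = mcomp (mcomp h g) f.
Proof. by apply: val_inj; apply/ffunP => i; rewrite /= !ffunE /app /= !ffunE. Qed.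

Record sset := SSet {
  sob :> nat -> Type;
  sact : forall m n : nat, mono m n -> sob n -> sob m;
  sact_id : forall n (x : sob n), sact (mid n) x = x;
  sact_comp : forall m n p (f : mono m n) (g : mono n p) (x : sob p),
      sact (mcomp g f) x = sact f (sact g x)
}.

Arguments sact {s m n} _ _.

Record smap (X Y : sset) := SMap {
  smfn :> forall n : nat, X n -> Y n;
  smnat : forall m n (f : mono m n) (x : X n),
      smfn (@sact X m n f x) = @sact Y m n f (smfn x)
}.

Arguments smfn {X Y} _ _ _.

Definition simplex (n : nat) : sset.
Proof.
refine (@SSet (fun m => mono m n) (fun m m' f t => mcomp t f) _ _).
- by move=> m t; exact: mcomp_id_r.
- by move=> m m' p f g t; rewrite mcomp_assoc.
Defined.

(* an m-simplex t of Delta[n] lies in the horn Lambda^k[n] (the union of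
   the faces opposite the vertices j <> k) iff it misses some vertex j <> k *)
Definition hornb (n : nat) (k : 'I_n.+1) (m : nat) (t : mono m n) : bool :=
  [exists j : 'I_n.+1, (j != k) && [forall i : 'I_m.+1, app t i != j]].

Lemma horn_act_proof n k m m' (f : mono m' m) (t : mono m n) :
  hornb k t -> hornb k (mcomp t f).
Proof.
case/existsP => j /andP [jk /forallP ht]; apply/existsP; exists j.
by rewrite jk /=; apply/forallP => i; rewrite /app /= ffunE; apply: ht.
Qed.

Definition horn (n : nat) (k : 'I_n.+1) : sset.
Proof.
refine (@SSet (fun m => {t : mono m n | hornb k t})
  (fun m m' f t => exist _ (mcomp (val t) f) (horn_act_proof f (valP t))) _ _).
- by move=> m t; apply: val_inj; exact: mcomp_id_r.
- by move=> m m' p f g t; apply: val_inj; rewrite /= mcomp_assoc.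
Defined.

Definition horn_incl (n : nat) (k : 'I_n.+1) : smap (horn k) (simplex n) :=
  @SMap (horn k) (simplex n) (fun m t => val t) (fun m m' f t => erefl).

Definition llp (A B X Y : sset) (i : smap A B) (p : smap X Y) : Prop :=
  forall (u : smap A X) (v : smap B Y),
    (forall n a, p n (u n a) = v n (i n a)) ->
    exists h : smap B X,
      (forall n a, h n (i n a) = u n a) /\ (forall n b, p n (h n b) = v n b).

Definition kan_fibration (X Y : sset) (p : smap X Y) : Prop :=
  forall (n : nat) (k : 'I_n.+1), (1 <= n)%N -> llp (horn_incl k) p.

Definition right_fibration (X Y : sset) (p : smap X Y) : Prop :=
  forall (n : nat) (k : 'I_n.+1), (1 <= n)%N -> (0 < k)%N -> llp (horn_incl k) p.

Definition anodyne (A B : sset) (f : smap A B) : Prop :=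
  forall (X Y : sset) (p : smap X Y), kan_fibration p -> llp f p.

Definition right_anodyne (A B : sset) (f : smap A B) : Prop :=
  forall (X Y : sset) (p : smap X Y), right_fibration p -> llp f p.

Definition is_pushout (A B C P : sset) (f : forall n, A n -> B n)
    (g : forall n, A n -> C n) (iB : smap B P) (iC : smap C P) : Prop :=
  (forall n a, iB n (f n a) = iC n (g n a)) /\
  forall (X : sset) (u : smap B X) (w : smap C X),
    (forall n a, u n (f n a) = w n (g n a)) ->
    exists k : smap P X,
      (forall n b, k n (iB n b) = u n b) /\ (forall n c, k n (iC n c) = w n c) /\
      forall k' : smap P X,
        (forall n b, k' n (iB n b) = u n b) -> (forall n c, k' n (iC n c) = w n c) ->
        forall n x, k' n x = k n x.

(* Objects of Delta^- are [n], n >= -1.  C Delta[n] = Delta[n+1].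
   For f : [k] -> [n] in Delta, fbar : [k+1] -> [n+1], 0 |-> 0,
   i |-> f(i-1)+1 for i > 0. *)
Definition fbar_fun (k n : nat) (f : mono k n) : {ffun 'I_k.+2 -> 'I_n.+2} :=
  [ffun i : 'I_k.+2 =>
     if (i : nat) == 0%N then ord0 else inord (app f (inord i.-1)).+1].

Lemma fbar_proof k n (f : mono k n) : monob (fbar_fun f).
Proof.
apply/forallP => i; apply/forallP => j; apply/implyP => hij; rewrite !ffunE.
case: eqP => [//|/eqP i0]; have j0 : (j : nat) != 0%N.
  by apply: contra i0 => /eqP j0; rewrite -leqn0 -j0.
rewrite (negPf j0) !inordK ?ltnS; last 2 first.
- by have := ltn_ord (app f (inord j.-1)).
- by have := ltn_ord (app f (inord i.-1)).
have hi : (i.-1 < k.+1)%N by rewrite -ltnS prednK ?lt0n ?ltn_ord.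
have hj : (j.-1 < k.+1)%N by rewrite -ltnS prednK ?lt0n ?ltn_ord.
apply: mono_le; rewrite !inordK //; by rewrite -!subn1 leq_sub2r.
Qed.

Definition fbar (k n : nat) (f : mono k n) : mono k.+1 n.+1 :=
  exist (fun f => monob f) _ (fbar_proof f).

(* for the (empty) map [-1] -> [n], the induced map [0] -> [n+1], 0 |-> 0 *)
Lemma cz_proof n : monob [ffun _ : 'I_1 => (ord0 : 'I_n.+2)].
Proof. by apply/forallP => i; apply/forallP => j; rewrite !ffunE; apply/implyP. Qed.

Definition cz (n : nat) : mono 0 n.+1 := exist (fun f => monob f) _ (cz_proof n).

Lemma delta0_proof n : monob [ffun i : 'I_n.+1 => lift ord0 i].
Proof. by apply/forallP => i; apply/forallP => j; rewrite !ffunE; apply/implyP. Qed.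

Definition delta0 (n : nat) : mono n n.+1 := exist (fun f => monob f) _ (delta0_proof n).

(* A cowedge from the functor (n, n') |-> A_n x C Delta[n'] on Delta^-
   (with A_{-1} = point) to X.  The component at [-1] is
   kp : Delta[0] -> X (since A_{-1} x C Delta[-1] = Delta[0]); the
   component at [n], n >= 0, is k n : A_n x Delta[n+1] -> X. *)
Definition is_cowedge (A X : sset) (kp : forall m, mono m 0 -> X m)
    (k : forall n m, A n -> mono m n.+1 -> X m) : Prop :=
  (forall m m' (g : mono m' m) (t : mono m 0), kp m' (mcomp t g) = sact g (kp m t)) /\
  (forall n m m' (g : mono m' m) (a : A n) (t : mono m n.+1),
      k n m' a (mcomp t g) = sact g (k n m a t)) /\
  (forall k0 n (f : mono k0 n) m (a : A n) (t : mono m k0.+1),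
      k k0 m (sact f a) t = k n m a (mcomp (fbar f) t)) /\
  (forall n m (a : A n) (t : mono m 0), kp m t = k n m a (mcomp (cz n) t)).

(* (CA, ip, i) is the coend CA = \int^{n in Delta^-} A_n x C Delta[n] *)
Definition is_cone (A CA : sset) (ip : forall m, mono m 0 -> CA m)
    (i : forall n m, A n -> mono m n.+1 -> CA m) : Prop :=
  is_cowedge ip i /\
  forall (X : sset) (kp : forall m, mono m 0 -> X m)
         (k : forall n m, A n -> mono m n.+1 -> X m),
    is_cowedge kp k ->
    exists g : smap CA X,
      (forall m t, g m (ip m t) = kp m t) /\
      (forall n m a t, g m (i n m a t) = k n m a t) /\
      forall g' : smap CA X,
        (forall m t, g' m (ip m t) = kp m t) ->
        (forall n m a t, g' m (i n m a t) = k n m a t) ->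
        forall m x, g' m x = g m x.

(* j_A : A -> CA, induced by delta_0 : Delta[n] -> Delta[n+1]: an
   n-simplex a of A goes to the class of (a, delta_0). *)
Definition cone_incl (A CA : sset) (i : forall n m, A n -> mono m n.+1 -> CA m) :
  forall n, A n -> CA n := fun n a => i n n a (delta0 n).

From mathcomp Require Import all_boot zify.
From Stdlib Require Import ProofIrrelevance.

Set Implicit Arguments.
Unset Strict Implicit.
Unset Printing Implicit Defensive.

(* Pick a right fibration p : X -> Y and a lifting problem (u, v) for the map
   B \sqcup_A CA -> CB, and let x0 be the image of the cone point under u.
   Maps CA -> X sending the cone point to x0 are the same as maps
   A -> x0/X into the coslice (simplices of X with initial vertex x0), so the
   lifting problem becomes one for f against the restriction map
   q : x0/X -> X *_Y (p x0)/Y.  Since Delta[0] * Lambda^k[n] glued to the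
   face d0 Delta[n] is the horn Lambda^(k+1)[n+1], a horn-filling problem for
   q is a right-horn-filling problem for p; hence q is a Kan fibration and
   the anodyne f lifts against it. *)

Lemma proj1_sig_inj (T : Type) (P : T -> Prop) (a b : {x | P x}) :
  proj1_sig a = proj1_sig b -> a = b.
Proof. exact: eq_sig_hprop (fun x => proof_irrelevance (P x)) a b. Qed.

Lemma mono_ext m n (s t : mono m n) : (forall i, (app s i : nat) = app t i) -> s = t.
Proof. by move=> st; apply: val_inj; apply/ffunP => i; apply: val_inj; exact: st. Qed.

Lemma mono_of_proof m n (f : 'I_m.+1 -> 'I_n.+1) :
  {homo f : i j / (i <= j)%N} -> monob [ffun i => f i].
Proof.
by move=> fle; apply/forallP => i; apply/forallP => j; apply/implyP; rewrite !ffunE; exact: fle.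
Qed.

Definition mono_of m n (f : 'I_m.+1 -> 'I_n.+1) (fle : {homo f : i j / (i <= j)%N}) :
  mono m n := exist (fun f => monob f) _ (mono_of_proof fle).

Lemma mono_ofE m n f fle i : app (@mono_of m n f fle) i = f i.
Proof. by rewrite /app /= ffunE. Qed.

Lemma mcompE m n p (g : mono n p) (f : mono m n) i : app (mcomp g f) i = app g (app f i).
Proof. by rewrite /app /= ffunE. Qed.

Lemma midE n i : app (mid n) i = i.
Proof. by rewrite /app /= ffunE. Qed.

Lemma czE n i : (app (cz n) i : nat) = 0.
Proof. by rewrite /app /= ffunE. Qed.

Lemma delta0E n i : (app (delta0 n) i : nat) = i.+1.
Proof. by rewrite /app /= ffunE. Qed.

Lemma fbarE k n (f : mono k n) i :
  (app (fbar f) i : nat) = if (i : nat) == 0 then 0 else (app f (inord i.-1)).+1.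
Proof.
rewrite /app /= ffunE; case: eqP => // _; rewrite inordK // ltnS.
exact: (ltn_ord (val f _)).
Qed.

Lemma mcomp_id_l m n (t : mono m n) : mcomp (mid n) t = t.
Proof. by apply: mono_ext => i; rewrite mcompE midE. Qed.

Lemma mono_le0 m n (t : mono m n) (i : 'I_m.+1) : (app t ord0 <= app t i)%N.
Proof. exact: mono_le. Qed.

Lemma mono_to0_eq m (s t : mono m 0) : s = t.
Proof.
apply: mono_ext => i; have := ltn_ord (app s i); have := ltn_ord (app t i).
by rewrite !ltnS !leqn0 => /eqP -> /eqP ->.
Qed.

Lemma fbar_id n : fbar (mid n) = mid n.+1.
Proof.
apply: mono_ext => i; rewrite fbarE !midE; case: eqP => [->//|/eqP i0].
by rewrite inordK ?prednK ?lt0n //; have := ltn_ord i; lia.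
Qed.

Lemma fbar_comp m n p (g : mono n p) (f : mono m n) :
  fbar (mcomp g f) = mcomp (fbar g) (fbar f).
Proof.
apply: mono_ext => i; rewrite mcompE fbarE [in RHS]fbarE fbarE; case: eqP => // _.
by rewrite /= mcompE inord_val.
Qed.

Lemma fbar_cz k n (f : mono k n) : mcomp (fbar f) (cz k) = cz n.
Proof. by apply: mono_ext => i; rewrite mcompE fbarE !czE. Qed.

Lemma fbar_delta0 k n (f : mono k n) : mcomp (fbar f) (delta0 k) = mcomp (delta0 n) f.
Proof.
apply: mono_ext => i; rewrite !mcompE fbarE !delta0E /=.
by congr (_.+1); congr (val (app f _)); apply: val_inj; rewrite /= inordK.
Qed.

Definition mono_to0 m : mono m 0 := @mono_of m 0 (fun _ => ord0) (fun _ _ _ => leqnn 0).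

Definition collapse m (z : nat) : mono m m.+1.
Proof.
refine (@mono_of m m.+1 (fun i => if (i < z)%N then ord0 else lift ord0 i) _).
by move=> i j ij; case: (ltnP i z); case: (ltnP j z) => /= jz iz; rewrite /bump ?leq0n /=; lia.
Defined.

Lemma collapseE m z i : (app (collapse m z) i : nat) = if (i < z)%N then 0 else i.+1.
Proof. by rewrite mono_ofE; case: ifP. Qed.

Lemma collapse_all m z : (m < z)%N -> collapse m z = mcomp (cz m) (mono_to0 m).
Proof.
move=> mz; apply: mono_ext => i; rewrite collapseE mcompE czE ifT //.
by have := ltn_ord i; lia.
Qed.

Definition clamp m (z : nat) : mono m m.
Proof.
refine (@mono_of m m (fun i => inord (maxn i (minn z m))) _).
by move=> i j ij; rewrite !inordK; have := ltn_ord i; have := ltn_ord j; lia.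
Defined.

Lemma clampE m z i : (app (clamp m z) i : nat) = maxn i (minn z m).
Proof. by rewrite mono_ofE inordK //; have := ltn_ord i; lia. Qed.

Lemma clamp_id m z (i : 'I_m.+1) : (z <= i)%N -> app (clamp m z) i = i.
Proof. by move=> zi; apply: val_inj; rewrite /= clampE; have := ltn_ord i; lia. Qed.

Lemma clamp_ge m z (i : 'I_m.+1) : (z <= m)%N -> (z <= app (clamp m z) i)%N.
Proof. by move=> zm; rewrite clampE; lia. Qed.

Definition pred_mono m n (t : mono m n.+1) : mono m n.
Proof.
refine (@mono_of m n (fun i => inord (app t i).-1) _).
move=> i j ij; have := mono_le t ij; have := ltn_ord (app t i); have := ltn_ord (app t j).
by move=> ? ? ?; rewrite !inordK; lia.
Defined.

Lemma pred_monoE m n (t : mono m n.+1) i : (app (pred_mono t) i : nat) = (app t i).-1.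
Proof. by rewrite mono_ofE inordK //; have := ltn_ord (app t i); lia. Qed.

Lemma pred_mono_comp m m' n (t : mono m n.+1) (g : mono m' m) :
  pred_mono (mcomp t g) = mcomp (pred_mono t) g.
Proof. by apply: mono_ext => i; rewrite mcompE !pred_monoE mcompE. Qed.

Definition zeros m n (t : mono m n) : nat :=
  \max_(i : 'I_m.+1 | (app t i : nat) == 0) i.+1.

Lemma zerosP m n (t : mono m n) i : ((app t i : nat) == 0) = (i < zeros t).
Proof.
apply/idP/idP => [t0|].
  exact: (@leq_bigmax_cond _ (fun i : 'I_m.+1 => (app t i : nat) == 0)
            (fun i : 'I_m.+1 => i.+1) i t0).
apply: contraLR => ti; rewrite -leqNgt; apply/bigmax_leqP => j tj.
rewrite ltnNge; apply: contra ti => ij.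
by have := mono_le t ij; rewrite (eqP tj) leqn0.
Qed.

Lemma zeros_gt0 m n (t : mono m n) : (app t ord0 : nat) = 0 -> (0 < zeros t)%N.
Proof. by move=> t0; rewrite -[0%N]/(nat_of_ord (@ord0 m)) -zerosP t0. Qed.

Lemma zeros_one m n (t : mono m n) : (app t ord0 : nat) = 0 ->
  (forall i : 'I_m.+1, (0 < i)%N -> (app t i : nat) != 0) -> zeros t = 1.
Proof.
move=> t0 ti; apply/eqP; rewrite eqn_leq zeros_gt0 // andbT.
apply/bigmax_leqP => j tj; case: (posnP j) => [->//|j0].
by rewrite (negbTE (ti j j0)) in tj.
Qed.

Definition yoneda (Y : sset) n (y : Y n) : smap (simplex n) Y :=
  @SMap (simplex n) Y (fun m t => sact t y) (fun m m' g t => sact_comp g t y).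

Section Under.
Variables (X Y : sset) (p : smap X Y) (x0 : X 0).

(* [under] is the coslice x0/X, [under_pb] is X *_Y (p x0)/Y and [under_proj]
   is the restriction map between them. *)

Definition under_ob (m : nat) := {s : X m.+1 | sact (cz m) s = x0}.

Lemma under_act_proof m n (g : mono m n) (s : under_ob n) :
  sact (cz m) (sact (fbar g) (proj1_sig s)) = x0.
Proof. by rewrite -sact_comp fbar_cz (proj2_sig s). Qed.

Definition under : sset.
Proof.
refine (@SSet under_ob (fun m n g s => exist _ _ (under_act_proof g s)) _ _).
- by move=> n s; apply: proj1_sig_inj; rewrite /= fbar_id sact_id.
- by move=> m n r f g s; apply: proj1_sig_inj; rewrite /= fbar_comp sact_comp.
Defined.

Definition under_pb_ob (m : nat) :=
  {xt : X m * Y m.+1 | sact (cz m) xt.2 = p 0 x0 /\ p m xt.1 = sact (delta0 m) xt.2}.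

Lemma under_pb_act_proof m n (g : mono m n) (s : under_pb_ob n) :
  sact (cz m) (sact (fbar g) (proj1_sig s).2) = p 0 x0 /\
  p m (sact g (proj1_sig s).1) = sact (delta0 m) (sact (fbar g) (proj1_sig s).2).
Proof.
case: s => [[x t] [t0 xt]] /=; split; first by rewrite -sact_comp fbar_cz.
by rewrite smnat xt -!sact_comp fbar_delta0.
Qed.

Definition under_pb : sset.
Proof.
refine (@SSet under_pb_ob (fun m n g s =>
  exist _ (sact g (proj1_sig s).1, sact (fbar g) (proj1_sig s).2)
    (under_pb_act_proof g s)) _ _).
- by move=> n [[x t] xt]; apply: proj1_sig_inj; rewrite /= fbar_id !sact_id.
- by move=> m n r f g [[x t] xt]; apply: proj1_sig_inj; rewrite /= fbar_comp !sact_comp.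
Defined.

Lemma under_proj_proof m (s : under m) :
  sact (cz m) (p m.+1 (proj1_sig s)) = p 0 x0 /\
  p m (sact (delta0 m) (proj1_sig s)) = sact (delta0 m) (p m.+1 (proj1_sig s)).
Proof. by rewrite -!smnat (proj2_sig s). Qed.

Definition under_proj : smap under under_pb.
Proof.
refine (@SMap under under_pb (fun m s =>
  exist _ (sact (delta0 m) (proj1_sig s), p m.+1 (proj1_sig s)) (under_proj_proof s)) _).
by move=> m n g s; apply: proj1_sig_inj; rewrite /= -!sact_comp fbar_delta0 smnat.
Defined.

Section HornLift.
Variables (n : nat) (k : 'I_n.+1).
Variables (al : smap (horn k) under) (be : smap (simplex n) under_pb).
Hypothesis al_be : forall m a, under_proj m (al m a) = be m (horn_incl k m a).

Definition base_face : X n := (proj1_sig (be n (mid n))).1.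
Definition base_cone : Y n.+1 := (proj1_sig (be n (mid n))).2.

Lemma beE m t : proj1_sig (be m t) = (sact t base_face, sact (fbar t) base_cone).
Proof. by have := smnat be t (mid n); rewrite /= mcomp_id_l => ->. Qed.

Lemma base_cone_cz : sact (cz n) base_cone = p 0 x0.
Proof. exact: (proj2_sig (be n (mid n))).1. Qed.

Lemma p_base_face : p n base_face = sact (delta0 n) base_cone.
Proof. exact: (proj2_sig (be n (mid n))).2. Qed.

Local Notation K := (lift ord0 k).

(* Off the horn the value is junk, chosen so that [horn_ext_cz] holds everywhere. *)
Definition horn_ext m (u : mono m n) : X m.+1 :=
  if insub u is Some w then proj1_sig (al m w) else sact (mono_to0 m.+1) x0.

Lemma horn_extE m (w : horn k m) : horn_ext (proj1_sig w) = proj1_sig (al m w).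
Proof. by case: w => u ku; rewrite /horn_ext (insubT (@hornb n k m) ku). Qed.

Lemma horn_ext_horn m (u : mono m n) (ku : hornb k u) :
  horn_ext u = proj1_sig (al m (exist _ u ku)).
Proof. exact: horn_extE (exist _ u ku). Qed.

Lemma horn_ext_nat m m' (u : mono m n) (g : mono m' m) :
  hornb k u -> horn_ext (mcomp u g) = sact (fbar g) (horn_ext u).
Proof.
move=> ku; have /= -> := horn_extE (@sact (horn k) _ _ g (exist _ u ku)).
have /(congr1 (@proj1_sig _ _)) /= -> := smnat al g (exist _ u ku).
by rewrite (horn_ext_horn ku).
Qed.

Lemma horn_ext_cz m (u : mono m n) : sact (cz m) (horn_ext u) = x0.
Proof.
case: (boolP (hornb k u)) => ku.
  by rewrite (horn_ext_horn ku) (proj2_sig (al m _)).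
rewrite /horn_ext (insubF _ (negbTE ku)) -sact_comp.
by rewrite (mono_to0_eq (mcomp (mono_to0 m.+1) (cz m)) (mid 0)) sact_id.
Qed.

Lemma horn_ext_delta0 m (u : mono m n) :
  hornb k u -> sact (delta0 m) (horn_ext u) = sact u base_face.
Proof.
move=> ku; rewrite (horn_ext_horn ku).
by have /(congr1 (fun s => (proj1_sig s).1)) := al_be (exist _ u ku); rewrite /= beE => ->.
Qed.

Lemma horn_ext_p m (u : mono m n) :
  hornb k u -> p m.+1 (horn_ext u) = sact (fbar u) base_cone.
Proof.
move=> ku; rewrite (horn_ext_horn ku).
by have /(congr1 (fun s => (proj1_sig s).2)) := al_be (exist _ u ku); rewrite /= beE => ->.
Qed.

Definition cone_base m (t : mono m n.+1) : mono m n :=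
  pred_mono (mcomp t (clamp m (zeros t))).

Lemma cone_baseE m (t : mono m n.+1) i :
  (app (cone_base t) i : nat) = (app t (app (clamp m (zeros t)) i) : nat).-1.
Proof. by rewrite pred_monoE mcompE. Qed.

Lemma fbar_cone_base m (t : mono m n.+1) :
  mcomp (fbar (cone_base t)) (collapse m (zeros t)) = t.
Proof.
apply: mono_ext => i; rewrite mcompE fbarE collapseE; case: ltnP => iz /=.
  by apply/esym/eqP; rewrite zerosP.
have ti : (app t i : nat) != 0 by rewrite zerosP -leqNgt.
by rewrite inord_val cone_baseE clamp_id // prednK // lt0n.
Qed.

(* A simplex t of Lambda^K[n+1] either meets the cone vertex 0, and then
   [fbar_cone_base] writes it as a degeneracy of the cone on a simplex of
   Lambda^k[n], or it lies on the face d0, where [base_face] is prescribed. *)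
Definition horn_fun m (t : mono m n.+1) : X m :=
  if (app t ord0 : nat) == 0 then sact (collapse m (zeros t)) (horn_ext (cone_base t))
  else sact (pred_mono t) base_face.

Lemma cone_base_horn m (t : mono m n.+1) :
  hornb K t -> (0 < zeros t)%N -> (zeros t <= m)%N -> hornb k (cone_base t).
Proof.
case/existsP => j /andP [jK /forallP tj] z0 zm.
have t0 : (app t ord0 : nat) == 0 by rewrite zerosP.
have j0 : (j : nat) != 0.
  by apply: contraNneq (tj ord0) => j0; apply/eqP/val_inj; rewrite /= j0; exact/eqP.
have jn := ltn_ord j.
apply/existsP; exists (inord j.-1); apply/andP; split.
  apply: contraNneq jK => /(congr1 val); rewrite /= inordK; last by lia.
  by move=> jk; apply/eqP/val_inj; rewrite [val K]lift0 -jk prednK ?lt0n.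
apply/forallP => i; apply: contraNneq (tj (app (clamp m (zeros t)) i)) => /(congr1 val).
rewrite /= cone_baseE inordK; last by lia.
have : (app t (app (clamp m (zeros t)) i) : nat) != 0 by rewrite zerosP -leqNgt clamp_ge.
by move=> tc e; apply/eqP/val_inj => /=; lia.
Qed.

Lemma collapse_horn_ext_eq m z (u1 u2 : mono m n) :
  hornb k u1 -> hornb k u2 -> (z <= m)%N ->
  (forall i : 'I_m.+1, (z <= i)%N -> (app u1 i : nat) = app u2 i) ->
  sact (collapse m z) (horn_ext u1) = sact (collapse m z) (horn_ext u2).
Proof.
move=> ku1 ku2 zm u12.
have -> : collapse m z = mcomp (fbar (clamp m z)) (collapse m z).
  apply: mono_ext => i; rewrite mcompE fbarE collapseE; case: (ltnP i z) => //= zi.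
  by rewrite inord_val clampE; have := ltn_ord i; lia.
rewrite !sact_comp -!horn_ext_nat //; congr (sact _ (horn_ext _)).
by apply: mono_ext => i; rewrite !mcompE; apply: u12; exact: clamp_ge.
Qed.

Lemma horn_fun_nat_face m m' (t : mono m n.+1) (g : mono m' m) :
  hornb K t -> (app t ord0 : nat) = 0 -> (app t (app g ord0) : nat) != 0 ->
  sact g (sact (collapse m (zeros t)) (horn_ext (cone_base t))) =
  sact (pred_mono (mcomp t g)) base_face.
Proof.
move=> Kt t0 tg0.
have zg i : (zeros t <= app g i)%N.
  rewrite leqNgt -zerosP; have := mono_le t (mono_le0 g i).
  by move: tg0; rewrite -!lt0n; lia.
have zm : (zeros t <= m)%N by have := zg ord0; have := ltn_ord (app g ord0); lia.
rewrite -sact_comp.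
have -> : mcomp (collapse m (zeros t)) g = mcomp (delta0 m) g.
  by apply: mono_ext => i; rewrite !mcompE collapseE delta0E ltnNge zg.
rewrite sact_comp horn_ext_delta0 ?cone_base_horn ?zeros_gt0 //.
rewrite -sact_comp; congr (sact _ base_face).
by apply: mono_ext => i; rewrite pred_monoE !mcompE cone_baseE clamp_id.
Qed.

Lemma collapse_all_sact m z (y : X m.+1) :
  (m < z)%N -> sact (cz m) y = x0 -> sact (collapse m z) y = sact (mono_to0 m) x0.
Proof. by move=> mz y0; rewrite collapse_all // sact_comp y0. Qed.

Lemma horn_fun_nat_cone m m' (t : mono m n.+1) (g : mono m' m) :
  hornb K t -> (app t (app g ord0) : nat) = 0 ->
  sact g (sact (collapse m (zeros t)) (horn_ext (cone_base t))) =
  sact (collapse m' (zeros (mcomp t g))) (horn_ext (cone_base (mcomp t g))).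
Proof.
move=> Kt tg0.
have z0 : (0 < zeros t)%N by apply/zeros_gt0/eqP; rewrite -leqn0 -tg0 mono_le0.
have z'0 : (0 < zeros (mcomp t g))%N by apply: zeros_gt0; rewrite mcompE.
have zg i : (app g i < zeros t)%N = (i < zeros (mcomp t g))%N by rewrite -!zerosP mcompE.
rewrite -sact_comp.
have -> : mcomp (collapse m (zeros t)) g =
          mcomp (fbar g) (collapse m' (zeros (mcomp t g))).
  apply: mono_ext => i; rewrite !mcompE fbarE !collapseE zg.
  by case: ltnP => //= _; rewrite inord_val.
rewrite sact_comp; case: (ltnP m' (zeros (mcomp t g))) => z'm.
  by rewrite !collapse_all_sact ?horn_ext_cz // -sact_comp fbar_cz horn_ext_cz.
have zm : (zeros t <= m)%N.
  have : ~~ (app g ord_max < zeros t) by rewrite zg -leqNgt.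
  by have := ltn_ord (app g ord_max); lia.
have Kt' := cone_base_horn Kt z0 zm.
rewrite -horn_ext_nat //; apply: collapse_horn_ext_eq => //.
- exact: horn_act_proof.
- exact: cone_base_horn (horn_act_proof g Kt) z'0 z'm.
- move=> i zi; rewrite mcompE !cone_baseE !clamp_id // ?mcompE //.
  by rewrite leqNgt zg -leqNgt.
Qed.

Lemma horn_fun_nat m m' (t : mono m n.+1) (g : mono m' m) :
  hornb K t -> horn_fun (mcomp t g) = sact g (horn_fun t).
Proof.
move=> Kt; rewrite /horn_fun mcompE.
case: (eqVneq (app t ord0 : nat) 0) => t0; last first.
  have -> : ((app t (app g ord0) : nat) == 0) = false.
    by apply/negbTE; move: t0 (mono_le0 t (app g ord0)); rewrite -!lt0n; lia.
  by rewrite pred_mono_comp sact_comp.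
case: (eqVneq (app t (app g ord0) : nat) 0) => tg0.
  by rewrite horn_fun_nat_cone.
by rewrite horn_fun_nat_face.
Qed.

Lemma horn_fun_p m (t : mono m n.+1) : hornb K t -> p m (horn_fun t) = sact t base_cone.
Proof.
move=> Kt; rewrite /horn_fun; case: (eqVneq (app t ord0 : nat) 0) => t0.
  case: (ltnP m (zeros t)) => zm.
    rewrite collapse_all_sact ?horn_ext_cz // smnat.
    have -> : t = mcomp (cz n) (mono_to0 m).
      apply: mono_ext => i; rewrite mcompE czE; apply/eqP; rewrite zerosP.
      by have := ltn_ord i; lia.
    by rewrite sact_comp base_cone_cz.
  rewrite smnat horn_ext_p ?cone_base_horn ?zeros_gt0 //.
  by rewrite -sact_comp fbar_cone_base.
rewrite smnat p_base_face -sact_comp; congr (sact _ base_cone).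
apply: mono_ext => i; rewrite mcompE delta0E pred_monoE.
by move: t0 (mono_le0 t i); rewrite -!lt0n => t0 ti; rewrite prednK //; lia.
Qed.

Definition horn_map : smap (horn K) X :=
  @SMap (horn K) X (fun m w => horn_fun (proj1_sig w))
    (fun m m' g w => horn_fun_nat g (proj2_sig w)).

Lemma horn_map_p m w : p m (horn_map m w) = yoneda base_cone m (horn_incl K m w).
Proof. exact: horn_fun_p (proj2_sig w). Qed.

(* For n = 0 the cone vertex of Delta[1] is not in Lambda^1[1]. *)
Lemma cz_horn : (0 < n)%N -> hornb K (cz n).
Proof.
move=> n0; have kn := ltn_ord k; apply/existsP.
exists (if k == ord_max then inord 1 else ord_max); apply/andP; split.
  apply/eqP => /(congr1 (@nat_of_ord _)); rewrite lift0.
  by case: eqP => [->|/eqP kmax] /=; [rewrite inordK|move/eqP: kmax => /val_eqP /=]; lia.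
apply/forallP => i; apply/eqP => /(congr1 (@nat_of_ord _)); rewrite czE.
by case: eqP => _ /=; rewrite ?inordK //; lia.
Qed.

Lemma fbar_horn m (u : mono m n) : hornb k u -> hornb K (fbar u).
Proof.
case/existsP => j /andP [jk /forallP uj]; apply/existsP; exists (lift ord0 j).
apply/andP; split.
  apply: contraNneq jk => /(congr1 (@nat_of_ord _)); rewrite lift0 /= /bump !leq0n => -[jk].
  exact/eqP/val_inj.
apply/forallP => i; apply/eqP => /(congr1 (@nat_of_ord _)); rewrite fbarE /= /bump leq0n /=.
by case: eqP => // _ [] ij; move/eqP: (uj (inord i.-1)); apply; apply: val_inj.
Qed.

Lemma delta0_horn m (u : mono m n) : hornb K (mcomp (delta0 n) u).
Proof.
apply/existsP; exists ord0; apply/andP; split.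
  by apply/eqP => /(congr1 (@nat_of_ord _)); rewrite lift0.
by apply/forallP => i; apply/eqP => /(congr1 (@nat_of_ord _)); rewrite mcompE delta0E.
Qed.

Lemma horn_fun_cz : horn_fun (cz n) = x0.
Proof.
rewrite /horn_fun czE eqxx (@zeros_one 0 _ (cz n)) ?czE //; last by case=> -[].
have -> : collapse 0 1 = cz 0 by apply: mono_ext => i; rewrite collapseE czE (ltn_ord i).
exact: horn_ext_cz.
Qed.

Section Fill.
Variable W : smap (simplex n.+1) X.
Hypothesis W_horn_map : forall m w, W m (horn_incl K m w) = horn_map m w.
Hypothesis W_p : forall m t, p m (W m t) = yoneda base_cone m t.

Lemma W_horn m (t : mono m n.+1) (Kt : hornb K t) : W m t = horn_fun t.
Proof. exact: (W_horn_map (exist _ t Kt)). Qed.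

Hypothesis n0 : (0 < n)%N.

Lemma fill_proof m (t : mono m n) : sact (cz m) (W m.+1 (fbar t)) = x0.
Proof. by rewrite -(smnat W) /= fbar_cz (W_horn (cz_horn n0)) horn_fun_cz. Qed.

Definition fill : smap (simplex n) under.
Proof.
refine (@SMap (simplex n) under (fun m t => exist _ (W m.+1 (fbar t)) (fill_proof t)) _).
by move=> m m' g t; apply: proj1_sig_inj; rewrite /= fbar_comp; exact: (smnat W).
Defined.

Lemma fill_horn m w : fill m (horn_incl k m w) = al m w.
Proof.
apply: proj1_sig_inj; case: w => u ku /=.
rewrite (W_horn (fbar_horn ku)) -(horn_ext_horn ku).
have z1 : zeros (fbar u) = 1.
  by apply: zeros_one => [|i i0]; rewrite fbarE ?(gtn_eqF i0).
rewrite /horn_fun fbarE /= z1.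
have -> : cone_base (fbar u) = mcomp u (pred_mono (mid m.+1)).
  apply: mono_ext => i; rewrite cone_baseE z1 fbarE clampE mcompE ifF; last by lia.
  congr (nat_of_ord (app u _)); apply: val_inj.
  by rewrite /= pred_monoE midE inordK; have := ltn_ord i; lia.
rewrite horn_ext_nat // -sact_comp.
have -> : mcomp (fbar (pred_mono (mid m.+1))) (collapse m.+1 1) = mid m.+1.
  apply: mono_ext => i; rewrite mcompE fbarE collapseE midE.
  by case: ltnP => i0 /=; [lia|rewrite inord_val pred_monoE midE; lia].
exact: sact_id.
Qed.

Lemma under_proj_fill m t : under_proj m (fill m t) = be m t.
Proof.
apply: proj1_sig_inj; rewrite beE /=; congr (_, _); last exact: W_p.
rewrite -(smnat W) /= fbar_delta0 (W_horn (delta0_horn t)) /horn_fun mcompE delta0E /=.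
by congr (sact _ base_face); apply: mono_ext => i; rewrite pred_monoE mcompE delta0E.
Qed.

End Fill.
End HornLift.

Lemma under_proj_kan : right_fibration p -> kan_fibration under_proj.
Proof.
move=> rfib n k n0 al be al_be.
have [W [W_horn_map W_p]] :=
  rfib n.+1 (lift ord0 k) (ltn0Sn n) (ltn0Sn k) _ _ (horn_map_p al_be).
exists (fill W_horn_map n0); split; first exact: fill_horn.
exact: under_proj_fill W_horn_map W_p n0.
Qed.

End Under.

Definition smap_comp (X Y Z : sset) (g : smap Y Z) (f : smap X Y) : smap X Z :=
  @SMap X Z (fun n x => g n (f n x))
    (fun m n t x => etrans (congr1 (g m) (smnat f t x)) (smnat g t (f n x))).

Lemma cowedge_pt (A X : sset) kp (k : forall n m, A n -> mono m n.+1 -> X m) :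
  is_cowedge kp k -> forall m t, kp m t = sact t (kp 0 (mid 0)).
Proof. by move=> cow m t; rewrite -cow.1 mcomp_id_l. Qed.

Lemma cowedge_simplex (A X : sset) kp (k : forall n m, A n -> mono m n.+1 -> X m) :
  is_cowedge kp k -> forall n m a t, k n m a t = sact t (k n n.+1 a (mid n.+1)).
Proof. by move=> cow n m a t; rewrite -cow.2.1 mcomp_id_l. Qed.

Lemma cowedge_comp (A X Z : sset) kp (k : forall n m, A n -> mono m n.+1 -> X m)
    (phi : smap X Z) :
  is_cowedge kp k ->
  is_cowedge (fun m t => phi m (kp m t)) (fun n m a t => phi m (k n m a t)).
Proof.
case=> [kp_nat [k_nat [k_dinat kp_dinat]]]; split; [|split; [|split]].
- by move=> m m' g t; rewrite kp_nat smnat.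
- by move=> n m m' g a t; rewrite k_nat smnat.
- by move=> k0 n g m a t; rewrite k_dinat.
- by move=> n m a t; rewrite (kp_dinat n m a t).
Qed.

Lemma cone_map_ext (A CA X : sset) ip (i : forall n m, A n -> mono m n.+1 -> CA m)
    kp (k : forall n m, A n -> mono m n.+1 -> X m) (g1 g2 : smap CA X) :
  is_cone ip i -> is_cowedge kp k ->
  (forall m t, g1 m (ip m t) = kp m t) -> (forall n m a t, g1 m (i n m a t) = k n m a t) ->
  (forall m t, g2 m (ip m t) = kp m t) -> (forall n m a t, g2 m (i n m a t) = k n m a t) ->
  forall m x, g1 m x = g2 m x.
Proof.
case=> _ univ cow g1_pt g1_simplex g2_pt g2_simplex m x.
have [g [_ [_ g_uniq]]] := univ X kp k cow.
by rewrite (g_uniq g1 g1_pt g1_simplex) (g_uniq g2 g2_pt g2_simplex).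
Qed.

(* Maps out of a cone sending the cone point to x0 correspond to maps into
   [under x0]: [cone_to_under] and [under_cowedge] are the two directions. *)
Lemma cone_to_under_proof (A CA X : sset) ip (i : forall n m, A n -> mono m n.+1 -> CA m)
    (g : smap CA X) n (a : A n) :
  is_cowedge ip i -> sact (cz n) (g n.+1 (i n n.+1 a (mid n.+1))) = g 0 (ip 0 (mid 0)).
Proof.
by case=> _ [k_nat [_ kp_dinat]]; rewrite -smnat -k_nat (kp_dinat n 0 a) mcomp_id_l mcomp_id_r.
Qed.

Definition cone_to_under (A CA X : sset) ip (i : forall n m, A n -> mono m n.+1 -> CA m)
    (cow : is_cowedge ip i) (g : smap CA X) : smap A (under (g 0 (ip 0 (mid 0)))).
Proof.
refine (@SMap A (under _) (fun n a => exist _ _ (cone_to_under_proof g a cow)) _).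
move=> m n h a; apply: proj1_sig_inj => /=; case: cow => _ [k_nat [k_dinat _]].
by rewrite -smnat -k_nat k_dinat mcomp_id_l mcomp_id_r.
Defined.

Lemma under_cowedge (A X : sset) (x0 : X 0) (h : smap A (under x0)) :
  is_cowedge (fun m t => sact t x0) (fun n m a t => sact t (proj1_sig (h n a))).
Proof.
split; [|split; [|split]].
- by move=> m m' g t; rewrite sact_comp.
- by move=> n m m' g a t; rewrite sact_comp.
- by move=> k n g m a t; rewrite (smnat h) sact_comp.
- by move=> n m a t; rewrite sact_comp (proj2_sig (h n a)).
Qed.

Section HatCfLift.
Variables (A B : sset) (f : smap A B).
Variables (CA : sset) (iAp : forall m, mono m 0 -> CA m).
Variable (iA : forall n m, A n -> mono m n.+1 -> CA m).
Variables (CB : sset) (iBp : forall m, mono m 0 -> CB m).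
Variable (iB : forall n m, B n -> mono m n.+1 -> CB m).
Hypotheses (coneA : is_cone iAp iA) (coneB : is_cone iBp iB).
Variable Cf : smap CA CB.
Hypothesis Cf_pt : forall m (t : mono m 0), Cf m (iAp t) = iBp t.
Hypothesis Cf_simplex :
  forall n m (a : A n) (t : mono m n.+1), Cf m (iA a t) = iB (f n a) t.
Variables (P : sset) (inB : smap B P) (inC : smap CA P).
Hypothesis po : is_pushout f (cone_incl iA) inB inC.
Variable hatCf : smap P CB.
Hypothesis hatCf_B : forall m b, hatCf m (inB m b) = cone_incl iB b.
Hypothesis hatCf_C : forall m c, hatCf m (inC m c) = Cf m c.
Variables (X Y : sset) (p : smap X Y) (u : smap P X) (v : smap CB Y).
Hypothesis uv : forall n x, p n (u n x) = v n (hatCf n x).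

Definition apex : X 0 := u 0 (inC 0 (iAp (mid 0))).

Definition u_under : smap A (under apex) := cone_to_under (proj1 coneA) (smap_comp u inC).

Definition v_under := cone_to_under (proj1 coneB) v.

Lemma apex_p : p 0 apex = v 0 (iBp (mid 0)).
Proof. by rewrite uv hatCf_C Cf_pt. Qed.

Lemma uv_under_pb_proof n (b : B n) :
  sact (cz n) (proj1_sig (v_under n b)) = p 0 apex /\
  p n (u n (inB n b)) = sact (delta0 n) (proj1_sig (v_under n b)).
Proof.
split; first by rewrite apex_p (proj2_sig (v_under n b)).
by rewrite uv hatCf_B /cone_incl (cowedge_simplex (cowedge_comp v (proj1 coneB))).
Qed.

Definition uv_under_pb : smap B (under_pb p apex).
Proof.
refine (@SMap B (under_pb p apex) (fun n b =>
  exist _ (u n (inB n b), proj1_sig (v_under n b)) (uv_under_pb_proof b)) _).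
move=> m n g b; apply: proj1_sig_inj; congr (_, _); first by rewrite /= !smnat.
by rewrite (smnat v_under).
Defined.

Lemma u_under_square n (a : A n) :
  under_proj p apex n (u_under n a) = uv_under_pb n (f n a).
Proof.
apply: proj1_sig_inj; congr (_, _) => /=.
  by rewrite -!smnat -(cowedge_simplex (proj1 coneA)) (proj1 po).
by rewrite uv hatCf_C Cf_simplex.
Qed.

Section Extension.
Variable h' : smap B (under apex).
Hypothesis h'_proj : forall n b, under_proj p apex n (h' n b) = uv_under_pb n b.
Variable h : smap CB X.
Hypothesis h_pt : forall m (t : mono m 0), h m (iBp t) = sact t apex.
Hypothesis h_simplex :
  forall n m (b : B n) (t : mono m n.+1), h m (iB b t) = sact t (proj1_sig (h' n b)).
Hypothesis h'_f : forall n a, h' n (f n a) = u_under n a.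

Lemma h_Cf m c : h m (Cf m c) = u m (inC m c).
Proof.
have cowA := cowedge_comp u (cowedge_comp inC (proj1 coneA)).
apply: (cone_map_ext (g1 := smap_comp h Cf) (g2 := smap_comp u inC) coneA cowA)
  => //= [m' t|n m' a t].
  by rewrite Cf_pt h_pt (cowedge_pt cowA).
by rewrite Cf_simplex h_simplex h'_f (cowedge_simplex cowA).
Qed.

Lemma h_hatCf n x : h n (hatCf n x) = u n x.
Proof.
have [k [_ [_ k_uniq]]] := proj2 po X (smap_comp u inB) (smap_comp u inC)
  (fun n a => congr1 (u n) (proj1 po n a)).
have -> : h n (hatCf n x) = k n x.
  apply: (k_uniq (smap_comp h hatCf)) => m b /=; last by rewrite hatCf_C h_Cf.
  rewrite hatCf_B /cone_incl h_simplex.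
  by case: (congr1 (@proj1_sig _ _) (h'_proj b)).
by rewrite (k_uniq u).
Qed.

Lemma p_h n y : p n (h n y) = v n y.
Proof.
apply: (cone_map_ext (g1 := smap_comp p h) (g2 := v) coneB (cowedge_comp v (proj1 coneB)))
  => //= [m t|n' m b t].
  by rewrite h_pt smnat apex_p -(cowedge_pt (cowedge_comp v (proj1 coneB))).
case: (congr1 (@proj1_sig _ _) (h'_proj b)) => _ ph'.
by rewrite h_simplex smnat ph' -(cowedge_simplex (cowedge_comp v (proj1 coneB))).
Qed.

End Extension.

Lemma hatCf_lift : anodyne f -> right_fibration p ->
  exists h : smap CB X,
    (forall n x, h n (hatCf n x) = u n x) /\ (forall n y, p n (h n y) = v n y).
Proof.
move=> anod rfib.
have [h' [h'_f h'_proj]] := anod _ _ _ (under_proj_kan rfib) _ _ u_under_square.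
have [h [h_pt [h_simplex _]]] := proj2 coneB X _ _ (under_cowedge h').
by exists h; split; [exact: h_hatCf | exact: p_h].
Qed.

End HatCfLift.

Theorem theorem4p7
  (A B : sset) (f : smap A B)
  (CA : sset) (iAp : forall m, mono m 0 -> CA m)
  (iA : forall n m, A n -> mono m n.+1 -> CA m)
  (CB : sset) (iBp : forall m, mono m 0 -> CB m)
  (iB : forall n m, B n -> mono m n.+1 -> CB m) :
  anodyne f ->
  is_cone iAp iA ->
  is_cone iBp iB ->
  forall Cf : smap CA CB,
  (* Cf = C f : CA -> CB, induced by f x id *)
  (forall m t, Cf m (iAp m t) = iBp m t) ->
  (forall n m a t, Cf m (iA n m a t) = iB n m (f n a) t) ->
  forall (P : sset) (inB : smap B P) (inC : smap CA P),
  (* P = B \sqcup_A CA, pushout of f and j_A *)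
  is_pushout f (cone_incl iA) inB inC ->
  forall hatCf : smap P CB,
  (forall m b, hatCf m (inB m b) = cone_incl iB b) ->
  (forall m c, hatCf m (inC m c) = Cf m c) ->
  right_anodyne hatCf.
Proof.
move=> anod coneA coneB Cf Cf_pt Cf_simplex P inB inC po hatCf hatCf_B hatCf_C.
move=> X Y p rfib u v uv.
exact: (hatCf_lift coneA coneB Cf_pt Cf_simplex po hatCf_B hatCf_C uv anod rfib).
Qed.
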